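(* Let $\gamma$ be the Euler–Mascheroni constant and $\lambda(s)=\sum_{n\ge0}(2n+1)^{-s}$ (for real $s>1$). Then $$\lim_{x\to\infty}\left\{\lambda(\lambda(x))-\frac12\left[3^x-\Bigl(\frac95\Bigr)^x-\Bigl(\frac97\Bigr)^x+\Bigl(\frac{27}{25}\Bigr)^x-1\right]\right\}=\frac12(\gamma+\ln2).$$ *)

From Stdlib Require Import Reals.
From Coquelicot Require Import Coquelicot.
Open Scope R_scope.

Definition dlambda (s : R) : R :=
  Series (fun n : nat => Rpower (2 * INR n + 1) (- s)).

Definition euler_gamma : R :=
  real (Lim_seq (fun n : nat =>
    sum_n_m (fun k : nat => / INR k) 1 n - ln (INR n))).

(* Split lambda(s) = 1/(2(s-1)) + lambda_reg(s), where lambda_reg(s) is the sum over n of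
   (2n+1)^(-s) minus the mean of u^(-s) over [2n+1, 2n+3] (the means telescope to 1/(2(s-1))).
   Each of these differences lies between 0 and (2n+1)^(-s) - (2n+3)^(-s), so the tails of
   lambda_reg are uniformly small for s >= 1 and lambda_reg(s) tends, as s -> 1+, to the sum of
   1/(2n+1) - (ln(2n+3) - ln(2n+1))/2, which odd harmonic sums identify as (gamma + ln 2)/2.
   On the other side lambda(x) -> 1+ as x -> oo, and with y = 3^x, A = (3/5)^x, B = (3/7)^x,
     lambda(x) - 1 = (1 + A + B + 1/y + O((9/11)^x / y)) / y,
   whose inverse is y - yA - yB + yA^2 - 1 + o(1), i.e. the bracket of the statement. Hence
   lambda(lambda(x)) = lambda_reg(lambda(x)) + 1/(2(lambda(x) - 1)) tends to (gamma + ln 2)/2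
   plus half of the bracket. *)

From Stdlib Require Import Reals Lra Lia.
From Coquelicot Require Import Coquelicot.
Open Scope R_scope.

Lemma ln_le_minus_1 x : 0 < x -> ln x <= x - 1.
Proof.
  intros Hx. rewrite <- (ln_exp (x - 1)). apply ln_le; [exact Hx|].
  pose proof (exp_ineq1_le (x - 1)). lra.
Qed.

Lemma ln_diff_bounds x y : 0 < x -> 0 < y -> (y - x) / y <= ln y - ln x <= (y - x) / x.
Proof.
  intros Hx Hy. split.
  - pose proof (ln_le_minus_1 (x / y) ltac:(apply Rdiv_lt_0_compat; lra)) as H.
    rewrite ln_div in H by lra.
    replace ((y - x) / y) with (- (x / y - 1)) by (field; lra). lra.
  - pose proof (ln_le_minus_1 (y / x) ltac:(apply Rdiv_lt_0_compat; lra)) as H.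
    rewrite ln_div in H by lra.
    replace ((y - x) / x) with (y / x - 1) by (field; lra). lra.
Qed.

Lemma Rpower_pos a x : 0 < Rpower a x.
Proof. apply exp_pos. Qed.

Lemma Rpower_1_base x : Rpower 1 x = 1.
Proof. unfold Rpower. rewrite ln_1, Rmult_0_r. apply exp_0. Qed.

Lemma Rpower_inv_base a x : 0 < a -> Rpower (/ a) x = Rpower a (- x).
Proof. intros Ha. unfold Rpower. rewrite ln_Rinv by exact Ha. f_equal. ring. Qed.

Lemma Rpower_div_base a b x : 0 < a -> 0 < b -> Rpower (a / b) x = Rpower a x / Rpower b x.
Proof.
  intros Ha Hb. unfold Rdiv, Rpower.
  rewrite ln_mult, ln_Rinv, Rmult_plus_distr_l, exp_plus, <- exp_Ropp by (auto with real).
  do 3 f_equal. ring.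
Qed.

Lemma Rpower_opp_antitone a b s : 0 < a <= b -> 0 <= s -> Rpower b (- s) <= Rpower a (- s).
Proof.
  intros Hab Hs. rewrite !Rpower_Ropp. apply Rinv_le_contravar; [apply Rpower_pos|].
  apply Rle_Rpower_l; lra.
Qed.

Lemma is_lim_Rpower_base_lt_1 q : 0 < q < 1 -> is_lim (fun x => Rpower q x) p_infty 0.
Proof.
  intros Hq. assert (Hl : ln q < 0) by (rewrite <- ln_1; apply ln_increasing; lra).
  apply (is_lim_comp exp (fun x => x * ln q) p_infty 0 m_infty).
  - apply is_lim_exp_m.
  - replace m_infty with (Rbar_mult p_infty (ln q)).
    + apply is_lim_scal_r, is_lim_id.
    + apply is_Rbar_mult_unique, is_Rbar_mult_p_infty_neg. exact Hl.
  - exists 0. intros x _. discriminate.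
Qed.

Lemma is_lim_Rpower_neg_exponent q : q < 0 -> is_lim (fun x => Rpower x q) p_infty 0.
Proof.
  intros Hq. apply (is_lim_comp exp (fun x => q * ln x) p_infty 0 m_infty).
  - apply is_lim_exp_m.
  - replace m_infty with (Rbar_mult q p_infty).
    + apply is_lim_scal_l, is_lim_ln_p.
    + rewrite Rbar_mult_comm. apply is_Rbar_mult_unique, is_Rbar_mult_p_infty_neg. exact Hq.
  - exists 0. intros x _. discriminate.
Qed.

Lemma is_lim_expm1_div k x : is_lim (fun s => (exp ((s - x) * k) - 1) / (s - x)) x k.
Proof.
  destruct (Req_dec k 0) as [-> | Hk].
  - apply (is_lim_ext_loc (fun _ => 0)); [|apply is_lim_const].
    exists (mkposreal 1 Rlt_0_1). intros s _ Hs.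
    rewrite Rmult_0_r, exp_0. field. contradict Hs. lra.
  - apply (is_lim_ext_loc (fun s => k * ((exp (k * s + - (k * x)) - 1) / (k * s + - (k * x))))).
    { exists (mkposreal 1 Rlt_0_1). intros s _ Hs.
      replace (k * s + - (k * x)) with ((s - x) * k) by ring. field.
      split; [|exact Hk]. contradict Hs. lra. }
    replace (Finite k) with (Rbar_mult k 1) by (simpl; f_equal; ring).
    apply is_lim_scal_l.
    apply (is_lim_comp_lin (fun y => (exp y - 1) / y)); [|exact Hk].
    replace (Rbar_plus (Rbar_mult k x) (- (k * x))) with (Finite 0) by (simpl; f_equal; ring).
    apply is_lim_div_expm1_0.
Qed.

(* [sum_n] is stated in an abelian monoid; [ring] and [field] need the equation typed in [R]. *)
Ltac R_eq := match goal with |- ?a = ?b => change (@eq R a b) end.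

Lemma sum_n_minus_R (u v : nat -> R) N : sum_n (fun n => u n - v n) N = sum_n u N - sum_n v N.
Proof.
  induction N as [|N IH].
  - rewrite !sum_O. reflexivity.
  - rewrite !sum_Sn, IH. unfold plus; simpl. ring.
Qed.

Lemma Series_telescoping_bound (a f : nat -> R) :
  (forall n, 0 <= a n <= f n - f (S n)) -> (forall n, 0 <= f n) ->
  ex_series a /\ forall N, sum_n a N <= Series a <= sum_n a N + f (S N).
Proof.
  intros Ha Hf.
  assert (Hgap : forall N k, 0 <= sum_n a (N + k) - sum_n a N <= f (S N) - f (S (N + k))).
  { intros N k. induction k as [|k IH].
    - rewrite Nat.add_0_r. lra.
    - rewrite Nat.add_succ_r, sum_Sn. unfold plus; simpl.
      specialize (Ha (S (N + k))). lra. }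
  assert (Hlim : ex_finite_lim_seq (sum_n a)).
  { apply ex_finite_lim_seq_incr with (f O).
    - intros n. rewrite sum_Sn. unfold plus; simpl. specialize (Ha (S n)). lra.
    - intros n. specialize (Hgap O n). rewrite sum_O in Hgap.
      specialize (Ha O). specialize (Hf (S n)). simpl in Hgap. lra. }
  destruct Hlim as [l Hl].
  assert (HS : Series a = l) by (apply is_series_unique; exact Hl).
  split; [exists l; exact Hl|]. intros N. rewrite HS.
  assert (Hev : eventually (fun n => sum_n a N <= sum_n a n <= sum_n a N + f (S N))).
  { exists N. intros n Hn. replace n with (N + (n - N))%nat by lia.
    specialize (Hgap N (n - N)%nat). specialize (Hf (S (N + (n - N)))). lra. }
  split.
  - change (Rbar_le (sum_n a N) l).
    apply (is_lim_seq_le_loc (fun _ => sum_n a N) (sum_n a)); [|apply is_lim_seq_const|exact Hl].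
    revert Hev; apply filter_imp; tauto.
  - change (Rbar_le l (sum_n a N + f (S N))).
    apply (is_lim_seq_le_loc (sum_n a) (fun _ => sum_n a N + f (S N)));
      [|exact Hl|apply is_lim_seq_const].
    revert Hev; apply filter_imp; tauto.
Qed.

Lemma filterlim_sum_n {T : Type} (F : (T -> Prop) -> Prop) {HF : Filter F}
  (a : T -> nat -> R) (b : nat -> R) :
  (forall n, filterlim (fun t => a t n) F (locally (b n))) ->
  forall N, filterlim (fun t => sum_n (a t) N) F (locally (sum_n b N)).
Proof.
  intros Ha N. induction N as [|N IH].
  - rewrite sum_O. apply (filterlim_ext (fun t => a t O)); [|apply Ha].
    intros t. symmetry. apply sum_O.
  - rewrite sum_Sn.
    apply (filterlim_ext (fun t => plus (sum_n (a t) N) (a t (S N)))).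
    { intros t. symmetry. apply sum_Sn. }
    apply (filterlim_comp_2 _ _ plus IH (Ha (S N))).
    exact (@filterlim_plus R_AbsRing R_NormedModule _ _).
Qed.

(* Tannery's theorem, for an arbitrary filter on the parameter. *)
Lemma filterlim_Series_uniform_tail {T : Type} (F : (T -> Prop) -> Prop) {HF : Filter F}
  (a : T -> nat -> R) (b r : nat -> R) :
  is_lim_seq r 0 ->
  F (fun t => forall N, Rabs (Series (a t) - sum_n (a t) N) <= r N) ->
  (forall N, Rabs (Series b - sum_n b N) <= r N) ->
  (forall n, filterlim (fun t => a t n) F (locally (b n))) ->
  filterlim (fun t => Series (a t)) F (locally (Series b)).
Proof.
  intros Hr Hatail Hbtail Hterm. apply filterlim_locally. intros eps.
  destruct (proj2 (is_lim_seq_spec r 0) Hr (pos_div_2 (pos_div_2 eps))) as [N HN].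
  specialize (HN N (Nat.le_refl N)). simpl in HN. rewrite Rminus_0_r in HN.
  pose proof (Rle_trans _ _ _ (Rabs_pos _) (Hbtail N)) as Hr0.
  rewrite Rabs_pos_eq in HN by exact Hr0.
  pose proof (proj1 (filterlim_locally _ _) (filterlim_sum_n F a b Hterm N)
                (pos_div_2 eps)) as Hsum.
  generalize (filter_and _ _ Hatail Hsum). apply filter_imp.
  intros t [Htail Hclose]. specialize (Htail N). specialize (Hbtail N).
  change (Rabs (Series (a t) - Series b) < eps).
  change (Rabs (sum_n (a t) N - sum_n b N) < eps / 2) in Hclose.
  apply Rabs_le_between in Htail. apply Rabs_le_between in Hbtail.
  apply Rabs_def2 in Hclose. simpl in HN. apply Rabs_def1; lra.
Qed.

(** * The regular part of lambda *)

Definition oddR (n : nat) : R := 2 * INR n + 1.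

Definition lambda_term (s : R) (n : nat) : R := Rpower (oddR n) (- s).

(* The mean of u^(-s) over [2n+1, 2n+3]; it telescopes and sums to 1/(2(s-1)). *)
Definition lambda_step (s : R) (n : nat) : R :=
  (Rpower (oddR n) (1 - s) - Rpower (oddR (S n)) (1 - s)) / (2 * (s - 1)).

Definition lambda_defect (s : R) (n : nat) : R := lambda_term s n - lambda_step s n.

Definition lambda_reg (s : R) : R := Series (lambda_defect s).

Lemma oddR_ge_1 n : 1 <= oddR n.
Proof. unfold oddR. pose proof (pos_INR n). lra. Qed.

Lemma oddR_S n : oddR (S n) = oddR n + 2.
Proof. unfold oddR. rewrite S_INR. ring. Qed.

Lemma is_lim_seq_oddR : is_lim_seq oddR p_infty.
Proof.
  apply (is_lim_seq_le_p_loc INR); [|apply is_lim_seq_INR].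
  exists O. intros n _. unfold oddR. pose proof (pos_INR n). lra.
Qed.

Lemma lambda_term_le_inv s n : 1 <= s -> lambda_term s n <= / oddR n.
Proof.
  intros Hs. unfold lambda_term. pose proof (oddR_ge_1 n).
  rewrite <- (Rpower_1 (oddR n)) at 2 by lra. rewrite <- Rpower_Ropp.
  apply Rle_Rpower; lra.
Qed.

Lemma lambda_step_mean_value s n : s <> 1 ->
  exists c, oddR n < c < oddR (S n) /\ lambda_step s n = Rpower c (- s).
Proof.
  intros Hs. rewrite oddR_S. pose proof (oddR_ge_1 n).
  destruct (MVT_cor2 (fun u => Rpower u (1 - s)) (fun u => (1 - s) * Rpower u (1 - s - 1))
              (oddR n) (oddR n + 2)) as [c [Hc Hcn]]; [lra| |].
  { intros c Hc. apply derivable_pt_lim_power. lra. }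
  exists c. split; [exact Hcn|]. cbv beta in Hc. unfold lambda_step. rewrite oddR_S.
  replace (1 - s - 1) with (- s) in Hc by ring.
  replace (Rpower (oddR n) (1 - s) - Rpower (oddR n + 2) (1 - s))
    with (- (Rpower (oddR n + 2) (1 - s) - Rpower (oddR n) (1 - s))) by ring.
  rewrite Hc. field. lra.
Qed.

Lemma lambda_step_bounds s n : 0 < s -> s <> 1 ->
  lambda_term s (S n) <= lambda_step s n <= lambda_term s n.
Proof.
  intros Hs Hs1. destruct (lambda_step_mean_value s n Hs1) as [c [Hc ->]].
  pose proof (oddR_ge_1 n). unfold lambda_term.
  split; apply Rpower_opp_antitone; lra.
Qed.

Lemma lambda_defect_bounds s n : 1 < s ->
  0 <= lambda_defect s n <= lambda_term s n - lambda_term s (S n).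
Proof.
  intros Hs. pose proof (lambda_step_bounds s n ltac:(lra) ltac:(lra)).
  unfold lambda_defect. lra.
Qed.

Lemma lambda_reg_bounds s : 1 < s ->
  ex_series (lambda_defect s) /\
  forall N, sum_n (lambda_defect s) N <= lambda_reg s
            <= sum_n (lambda_defect s) N + lambda_term s (S N).
Proof.
  intros Hs. apply Series_telescoping_bound.
  - intros n. apply lambda_defect_bounds, Hs.
  - intros n. left. apply Rpower_pos.
Qed.

Lemma sum_lambda_step s N : s <> 1 ->
  sum_n (lambda_step s) N = (1 - Rpower (oddR (S N)) (1 - s)) / (2 * (s - 1)).
Proof.
  intros Hs. induction N as [|N IH].
  - rewrite sum_O. unfold lambda_step.
    replace (oddR 0) with 1 by (unfold oddR; simpl; ring). rewrite Rpower_1_base. reflexivity.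
  - rewrite sum_Sn, IH. unfold plus, lambda_step; simpl. field. lra.
Qed.

Lemma is_series_lambda_step s : 1 < s -> is_series (lambda_step s) (/ (2 * (s - 1))).
Proof.
  intros Hs. change (is_lim_seq (sum_n (lambda_step s)) (/ (2 * (s - 1)))).
  apply (is_lim_seq_ext (fun N => (1 - Rpower (oddR (S N)) (1 - s)) / (2 * (s - 1)))).
  { intros N. symmetry. apply sum_lambda_step. lra. }
  replace (/ (2 * (s - 1))) with ((1 - 0) / (2 * (s - 1))) by (field; lra).
  unfold Rdiv. apply is_lim_seq_mult'; [|apply is_lim_seq_const].
  apply is_lim_seq_minus'; [apply is_lim_seq_const|].
  apply (is_lim_seq_incr_1 (fun N => Rpower (oddR N) (1 - s))).
  apply (is_lim_comp_seq (fun x => Rpower x (1 - s)) oddR p_infty 0).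
  - apply is_lim_Rpower_neg_exponent. lra.
  - exists O. intros n _. discriminate.
  - apply is_lim_seq_oddR.
Qed.

Lemma dlambda_decomposition s : 1 < s -> dlambda s = lambda_reg s + / (2 * (s - 1)).
Proof.
  intros Hs. destruct (lambda_reg_bounds s Hs) as [Hex _].
  pose proof (is_series_lambda_step s Hs) as Hstep.
  unfold dlambda, lambda_reg.
  rewrite (Series_ext _ (fun n => lambda_defect s n + lambda_step s n))
    by (intros; unfold lambda_defect, lambda_term, oddR; ring).
  rewrite Series_plus, (is_series_unique _ _ Hstep); [reflexivity|exact Hex|].
  eexists; exact Hstep.
Qed.

Lemma dlambda_partial_sum_bounds s N : 1 < s ->
  let tail := Rpower (oddR (S N)) (1 - s) / (2 * (s - 1)) in
  sum_n (lambda_term s) N + tail <= dlambda s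
  <= sum_n (lambda_term s) N + tail + lambda_term s (S N).
Proof.
  intros Hs tail. rewrite dlambda_decomposition by exact Hs.
  destruct (lambda_reg_bounds s Hs) as [_ HB]. specialize (HB N).
  unfold lambda_defect in HB. rewrite sum_n_minus_R, sum_lambda_step in HB by lra.
  replace ((1 - Rpower (oddR (S N)) (1 - s)) / (2 * (s - 1)))
    with (/ (2 * (s - 1)) - tail) in HB by (unfold tail; field; lra).
  lra.
Qed.

(** * The regular part at s = 1 *)

Definition harmonic (n : nat) : R := sum_n_m (fun k : nat => / INR k) 1 n.

Definition euler_gap (n : nat) : R := harmonic n - ln (INR n).

Lemma harmonic_0 : harmonic 0 = 0.
Proof. unfold harmonic. rewrite sum_n_m_zero by lia. reflexivity. Qed.

Lemma harmonic_S n : harmonic (S n) = harmonic n + / INR (S n).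
Proof. unfold harmonic. rewrite sum_n_Sm by lia. reflexivity. Qed.

Lemma ln_S_le_harmonic n : ln (INR (S n)) <= harmonic n.
Proof.
  induction n as [|n IH].
  - rewrite harmonic_0. simpl. rewrite ln_1. lra.
  - rewrite harmonic_S. pose proof (lt_0_INR (S n) ltac:(lia)).
    pose proof (ln_diff_bounds (INR (S n)) (INR (S (S n))) ltac:(lra) ltac:(apply lt_0_INR; lia)).
    rewrite (S_INR (S n)) in *.
    replace ((INR (S n) + 1 - INR (S n)) / INR (S n)) with (/ INR (S n)) in * by (field; lra).
    lra.
Qed.

Lemma euler_gap_decreasing n : euler_gap (S (S n)) <= euler_gap (S n).
Proof.
  unfold euler_gap. rewrite harmonic_S.
  pose proof (lt_0_INR (S n) ltac:(lia)).
  pose proof (ln_diff_bounds (INR (S n)) (INR (S (S n))) ltac:(lra) ltac:(apply lt_0_INR; lia)).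
  rewrite (S_INR (S n)) in *.
  replace ((INR (S n) + 1 - INR (S n)) / (INR (S n) + 1)) with (/ (INR (S n) + 1)) in *
    by (field; lra).
  lra.
Qed.

Lemma euler_gap_nonneg n : 0 <= euler_gap (S n).
Proof.
  unfold euler_gap. rewrite harmonic_S. pose proof (ln_S_le_harmonic n).
  pose proof (Rinv_0_lt_compat _ (lt_0_INR (S n) ltac:(lia))). lra.
Qed.

Lemma is_lim_seq_euler_gap : is_lim_seq euler_gap euler_gamma.
Proof.
  destruct (ex_finite_lim_seq_decr (fun n => euler_gap (S n)) 0 euler_gap_decreasing
              euler_gap_nonneg) as [l Hl].
  assert (Hgamma : euler_gamma = l).
  { unfold euler_gamma.
    change (fun n => sum_n_m (fun k => / INR k) 1 n - ln (INR n)) with euler_gap.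
    rewrite <- Lim_seq_incr_1, (is_lim_seq_unique _ _ Hl). reflexivity. }
  rewrite Hgamma. apply is_lim_seq_incr_1, Hl.
Qed.

Lemma sum_inv_oddR N : sum_n (fun n => / oddR n) N = harmonic (2 * N + 2) - harmonic (N + 1) / 2.
Proof.
  induction N as [|N IH].
  - rewrite sum_O. simpl. rewrite !harmonic_S, harmonic_0. unfold oddR. simpl. field.
  - rewrite sum_Sn, IH. change (plus ?a ?b) with (a + b).
    replace (2 * S N + 2)%nat with (S (S (2 * N + 2))) by lia.
    replace (S N + 1)%nat with (S (N + 1)) by lia.
    rewrite !harmonic_S.
    replace (INR (S (S (2 * N + 2)))) with (2 * INR N + 4)
      by (rewrite !S_INR, plus_INR, mult_INR; simpl; ring).
    replace (INR (S (2 * N + 2))) with (2 * INR N + 3)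
      by (rewrite S_INR, plus_INR, mult_INR; simpl; ring).
    replace (INR (S (N + 1))) with (INR N + 2) by (rewrite S_INR, plus_INR; simpl; ring).
    rewrite oddR_S. unfold oddR. pose proof (pos_INR N).
    R_eq. field. lra.
Qed.

Definition lambda_defect1 (n : nat) : R := / oddR n - (ln (oddR (S n)) - ln (oddR n)) / 2.

Lemma lambda_defect1_bounds n : 0 <= lambda_defect1 n <= / oddR n - / oddR (S n).
Proof.
  unfold lambda_defect1. pose proof (oddR_ge_1 n).
  pose proof (ln_diff_bounds (oddR n) (oddR (S n)) ltac:(lra) ltac:(rewrite oddR_S; lra)).
  rewrite oddR_S in *.
  replace ((oddR n + 2 - oddR n) / (oddR n + 2)) with (2 * / (oddR n + 2)) in * by (field; lra).
  replace ((oddR n + 2 - oddR n) / oddR n) with (2 * / oddR n) in * by (field; lra).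
  lra.
Qed.

Lemma sum_lambda_defect1 N :
  sum_n lambda_defect1 N = euler_gap (2 * N + 2) - euler_gap (N + 1) / 2 + ln 2 / 2
                           - (ln (oddR (S N)) - ln (2 * INR (S N))) / 2.
Proof.
  unfold lambda_defect1. rewrite sum_n_minus_R, sum_inv_oddR.
  assert (Hln : sum_n (fun n => (ln (oddR (S n)) - ln (oddR n)) / 2) N = ln (oddR (S N)) / 2).
  { induction N as [|N IH].
    - rewrite sum_O. replace (oddR 0) with 1 by (unfold oddR; simpl; ring).
      rewrite ln_1. R_eq. field.
    - rewrite sum_Sn, IH. change (plus ?a ?b) with (a + b). R_eq. field. }
  rewrite Hln. unfold euler_gap.
  replace (2 * N + 2)%nat with (2 * S N)%nat by lia. replace (N + 1)%nat with (S N) by lia.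
  pose proof (lt_0_INR (S N) ltac:(lia)).
  rewrite mult_INR. replace (INR 2) with 2 by reflexivity.
  rewrite ln_mult by lra. R_eq. field.
Qed.

Lemma is_series_lambda_defect1 : is_series lambda_defect1 ((euler_gamma + ln 2) / 2).
Proof.
  change (is_lim_seq (sum_n lambda_defect1) ((euler_gamma + ln 2) / 2)).
  apply (is_lim_seq_ext _ _ _ (fun N => eq_sym (sum_lambda_defect1 N))).
  replace ((euler_gamma + ln 2) / 2) with (euler_gamma - euler_gamma / 2 + ln 2 / 2 - 0 / 2)
    by field.
  apply is_lim_seq_minus'; [apply is_lim_seq_plus'; [apply is_lim_seq_minus'|]|].
  - apply (is_lim_seq_subseq euler_gap euler_gamma (fun N => 2 * N + 2)%nat);
      [apply eventually_subseq; intros; lia|apply is_lim_seq_euler_gap].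
  - unfold Rdiv. apply is_lim_seq_mult'; [|apply is_lim_seq_const].
    apply (is_lim_seq_subseq euler_gap euler_gamma (fun N => N + 1)%nat);
      [apply eventually_subseq; intros; lia|apply is_lim_seq_euler_gap].
  - apply is_lim_seq_const.
  - unfold Rdiv. apply is_lim_seq_mult'; [|apply is_lim_seq_const].
    apply (is_lim_seq_le_le (fun _ => 0) _ (fun N => / INR (S N)));
      [|apply is_lim_seq_const|].
    + intros N. pose proof (lt_0_INR (S N) ltac:(lia)).
      pose proof (ln_diff_bounds (2 * INR (S N)) (oddR (S N)) ltac:(lra) ltac:(unfold oddR; lra)).
      replace (oddR (S N) - 2 * INR (S N)) with 1 in * by (unfold oddR; ring).
      assert (1 / (2 * INR (S N)) <= / INR (S N)).
      { unfold Rdiv. rewrite Rmult_1_l. apply Rinv_le_contravar; lra. }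
      assert (0 < 1 / oddR (S N)) by (apply Rdiv_lt_0_compat; unfold oddR; lra).
      lra.
    + replace (Finite 0) with (Rbar_inv p_infty) by reflexivity.
      apply is_lim_seq_inv; [|discriminate].
      apply (is_lim_seq_incr_1 INR), is_lim_seq_INR.
Qed.

Lemma is_lim_lambda_defect n : is_lim (fun s => lambda_defect s n) 1 (lambda_defect1 n).
Proof.
  set (L := ln (oddR n)). set (L' := ln (oddR (S n))).
  assert (Hm : 0 < oddR n) by (pose proof (oddR_ge_1 n); lra).
  apply (is_lim_ext_loc (fun s => exp (- s * L)
           - ((exp ((s - 1) * - L) - 1) / (s - 1) - (exp ((s - 1) * - L') - 1) / (s - 1)) / 2)).
  { exists (mkposreal 1 Rlt_0_1). intros s _ Hs.
    unfold lambda_defect, lambda_term, lambda_step, Rpower. fold L L'.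
    replace ((1 - s) * L) with ((s - 1) * - L) by ring.
    replace ((1 - s) * L') with ((s - 1) * - L') by ring.
    field. contradict Hs. lra. }
  replace (lambda_defect1 n) with (exp (- 1 * L) - (- L - - L') / 2).
  2:{ unfold lambda_defect1. fold L L'.
      rewrite <- (exp_ln (oddR n)) at 1 by exact Hm. fold L.
      rewrite <- exp_Ropp. replace (- 1 * L) with (- L) by ring. field. }
  apply is_lim_minus'.
  - apply (is_lim_continuity (fun s => exp (- s * L))). reg.
  - change (Finite ((- L - - L') / 2)) with (Rbar_mult (- L - - L') (/ 2)).
    apply (is_lim_scal_r (fun y => (exp ((y - 1) * - L) - 1) / (y - 1)
                                   - (exp ((y - 1) * - L') - 1) / (y - 1))).
    apply is_lim_minus'; apply is_lim_expm1_div.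
Qed.

Lemma lambda_reg_at_1 :
  filterlim lambda_reg (at_right 1) (locally ((euler_gamma + ln 2) / 2)).
Proof.
  rewrite <- (is_series_unique _ _ is_series_lambda_defect1).
  apply (filterlim_Series_uniform_tail _ lambda_defect lambda_defect1 (fun N => / oddR (S N))).
  - replace (Finite 0) with (Rbar_inv p_infty) by reflexivity.
    apply is_lim_seq_inv; [|discriminate].
    apply (is_lim_seq_incr_1 oddR), is_lim_seq_oddR.
  - exists (mkposreal 1 Rlt_0_1). intros s _ Hs N.
    destruct (lambda_reg_bounds s Hs) as [_ HB]. specialize (HB N).
    pose proof (lambda_term_le_inv s (S N) ltac:(lra)).
    unfold lambda_reg in HB. apply Rabs_le. lra.
  - intros N. destruct (Series_telescoping_bound lambda_defect1 (fun n => / oddR n))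
      as [_ HB]; [apply lambda_defect1_bounds| |].
    + intros n. left. apply Rinv_0_lt_compat. pose proof (oddR_ge_1 n). lra.
    + specialize (HB N). apply Rabs_le. lra.
  - intros n. apply (filterlim_filter_le_1 _ (F := Rbar_locally' 1)).
    + intros P [eps HP]. exists eps. intros s Hs Hs1. apply HP; [exact Hs|lra].
    + apply is_lim_lambda_defect.
Qed.

(** * lambda(x) as x tends to infinity *)

Lemma dlambda_sub_1_bounds x : 3 <= x -> 0 < dlambda x - 1 <= 2 * Rpower (/ 3) x.
Proof.
  intros Hx. pose proof (dlambda_partial_sum_bounds x 0 ltac:(lra)) as HB. cbv zeta in HB.
  rewrite sum_O in HB. unfold lambda_term in HB.
  replace (oddR 0) with 1 in HB by (unfold oddR; simpl; ring).
  replace (oddR 1) with 3 in HB by (unfold oddR; simpl; ring).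
  replace (1 - x) with (1 + - x) in HB by ring.
  rewrite Rpower_1_base, Rpower_plus, Rpower_1, <- Rpower_inv_base in HB by lra.
  pose proof (Rpower_pos (/ 3) x) as Hq. set (q := Rpower (/ 3) x) in *.
  assert (Htail : 0 < 3 * q / (2 * (x - 1)) <= q).
  { split; [apply Rdiv_lt_0_compat; lra|].
    apply (Rmult_le_reg_r (2 * (x - 1))); [lra|].
    unfold Rdiv. rewrite Rmult_assoc, Rinv_l by lra. nra. }
  lra.
Qed.

Lemma filterlim_dlambda_at_right_1 : filterlim dlambda (Rbar_locally p_infty) (at_right 1).
Proof.
  intros P [eps HP].
  destruct (proj2 (is_lim_spec _ _ _) (is_lim_Rpower_base_lt_1 (/ 3) ltac:(lra))
              (pos_div_2 eps)) as [M HM].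
  exists (Rmax M 3). intros x Hx.
  pose proof (Rmax_l M 3). pose proof (Rmax_r M 3).
  specialize (HM x ltac:(lra)). simpl in HM. rewrite Rminus_0_r, Rabs_pos_eq in HM
    by (left; apply Rpower_pos).
  destruct (dlambda_sub_1_bounds x ltac:(lra)) as [H1 H2].
  apply HP; [|lra]. change (Rabs (dlambda x - 1) < eps). rewrite Rabs_pos_eq; lra.
Qed.

Lemma inv_expansion_error y A B R : 0 < y -> / y <= B -> B <= A -> A <= 1 -> 0 <= R <= / y ->
  Rabs (y / (1 + A + B + / y + R) - (y - y * A - y * B + y * A * A - 1))
  <= 15 * (y * A * B) + 4 * (y * A * A * A) + y * R.
Proof.
  intros Hy HDB HBA HA HR.
  assert (Hy' : 0 < / y) by (apply Rinv_0_lt_compat; exact Hy).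
  set (v := B + / y + R). set (u := A + v).
  assert (Hv : 0 <= v <= 3 * B) by (unfold v; lra).
  (* Using [1 = y / y], the error is [y (u^2 - A^2 - A^2 u) / (1 + u) - y R]. *)
  assert (Herr : y / (1 + A + B + / y + R) - (y - y * A - y * B + y * A * A - 1)
                 = y * ((v * (2 * A + v) - A * A * u) / (1 + u)) - y * R).
  { replace (1 + A + B + / y + R) with (1 + u) by (unfold u, v; ring).
    unfold u, v. field. split; [lra|nra]. }
  rewrite Herr.
  assert (HN : Rabs (v * (2 * A + v) - A * A * u) <= 15 * A * B + 4 * A * A * A).
  { assert (0 <= v * (2 * A + v) <= 15 * A * B).
    { split; [apply Rmult_le_pos; lra|].
      assert (v * (2 * A + v) <= 3 * B * (2 * A + 3 * B)) by (apply Rmult_le_compat; lra).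
      nra. }
    assert (0 <= A * A * u <= 4 * A * A * A) by (unfold u; split; nra).
    apply Rabs_le. lra. }
  assert (HNu : Rabs ((v * (2 * A + v) - A * A * u) / (1 + u))
                <= Rabs (v * (2 * A + v) - A * A * u)).
  { unfold Rdiv. rewrite Rabs_mult, Rabs_inv, (Rabs_pos_eq (1 + u)) by (unfold u; lra).
    pose proof (Rabs_pos (v * (2 * A + v) - A * A * u)).
    rewrite <- (Rmult_1_r (Rabs _)) at 2. apply Rmult_le_compat_l; [lra|].
    rewrite <- Rinv_1. apply Rinv_le_contravar; unfold u; lra. }
  eapply Rle_trans; [apply Rabs_triang|].
  rewrite Rabs_Ropp, !Rabs_mult, Rabs_pos_eq, (Rabs_pos_eq R) by lra.
  assert (y * Rabs ((v * (2 * A + v) - A * A * u) / (1 + u)) <= y * (15 * A * B + 4 * A * A * A))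
    by (apply Rmult_le_compat_l; lra).
  lra.
Qed.

Lemma Rpower_9_11_le_half x : 7 <= x -> Rpower (9 / 11) x <= / 2.
Proof.
  intros Hx. replace (9 / 11) with (/ (11 / 9)) by field.
  rewrite Rpower_inv_base, Rpower_Ropp by lra. apply Rinv_le_contravar; [lra|].
  apply Rle_trans with (Rpower (11 / 9) (INR 7)).
  - rewrite Rpower_pow by lra. simpl. lra.
  - apply Rle_Rpower; [lra|]. simpl. lra.
Qed.

Lemma dlambda_head_bounds x : 7 <= x ->
  0 <= dlambda x - (1 + / Rpower 3 x + / Rpower 5 x + / Rpower 7 x + / Rpower 9 x)
    <= 2 / Rpower 11 x.
Proof.
  intros Hx. pose proof (dlambda_partial_sum_bounds x 4 ltac:(lra)) as HB. cbv zeta in HB.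
  rewrite !sum_Sn, sum_O in HB. repeat change (plus ?a ?b) with (a + b) in HB.
  unfold lambda_term, oddR in HB. simpl INR in HB.
  replace (2 * 0 + 1) with 1 in HB by ring.
  replace (2 * 1 + 1) with 3 in HB by ring.
  replace (2 * (1 + 1) + 1) with 5 in HB by ring.
  replace (2 * (1 + 1 + 1) + 1) with 7 in HB by ring.
  replace (2 * (1 + 1 + 1 + 1) + 1) with 9 in HB by ring.
  replace (2 * (1 + 1 + 1 + 1 + 1) + 1) with 11 in HB by ring.
  replace (1 - x) with (1 + - x) in HB by ring.
  rewrite Rpower_1_base, Rpower_plus, Rpower_1, !Rpower_Ropp in HB by lra.
  pose proof (Rinv_0_lt_compat _ (Rpower_pos 11 x)) as H11.
  assert (0 < 11 * / Rpower 11 x / (2 * (x - 1)) <= / Rpower 11 x).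
  { split; [apply Rdiv_lt_0_compat; lra|].
    apply (Rmult_le_reg_r (2 * (x - 1))); [lra|].
    unfold Rdiv. rewrite Rmult_assoc, Rinv_l by lra. nra. }
  lra.
Qed.

Lemma dlambda_sub_1_expansion x : 7 <= x ->
  exists R, 0 <= R /\ Rpower 3 x * R <= 2 * Rpower (9 / 11) x /\
    dlambda x - 1 = (1 + Rpower (3 / 5) x + Rpower (3 / 7) x + / Rpower 3 x + R) / Rpower 3 x.
Proof.
  intros Hx. pose proof (dlambda_head_bounds x Hx) as HW.
  replace 9 with (3 * 3) in HW by ring. replace (9 / 11) with (3 * 3 / 11) by field.
  rewrite <- Rpower_mult_distr in HW by lra.
  rewrite !Rpower_div_base, <- Rpower_mult_distr by lra.
  pose proof (Rpower_pos 3 x) as H3. pose proof (Rpower_pos 5 x) as H5.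
  pose proof (Rpower_pos 7 x) as H7. pose proof (Rpower_pos 11 x) as H11.
  set (p3 := Rpower 3 x) in *. set (p5 := Rpower 5 x) in *.
  set (p7 := Rpower 7 x) in *. set (p11 := Rpower 11 x) in *.
  exists (p3 * (dlambda x - (1 + / p3 + / p5 + / p7 + / (p3 * p3)))).
  split; [apply Rmult_le_pos; lra|]. split.
  - replace (2 * (p3 * p3 / p11)) with (p3 * p3 * (2 / p11)) by (field; lra).
    rewrite <- Rmult_assoc. apply Rmult_le_compat_l; [nra|lra].
  - field. lra.
Qed.

Lemma inv_dlambda_sub_1_error x : 7 <= x ->
  Rabs (/ (dlambda x - 1)
        - (Rpower 3 x - Rpower (9 / 5) x - Rpower (9 / 7) x + Rpower (27 / 25) x - 1))
  <= 15 * Rpower (27 / 35) x + 4 * Rpower (81 / 125) x + 2 * Rpower (9 / 11) x.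
Proof.
  intros Hx. destruct (dlambda_sub_1_expansion x Hx) as [R [HR [HyR ->]]].
  pose proof (Rpower_9_11_le_half x Hx).
  assert (Hord : / Rpower 3 x <= Rpower (3 / 7) x /\ Rpower (3 / 7) x <= Rpower (3 / 5) x
                 /\ Rpower (3 / 5) x <= 1).
  { rewrite <- Rpower_Ropp, <- Rpower_inv_base, <- (Rpower_1_base x) by lra.
    repeat split; apply Rle_Rpower_l; lra. }
  replace (9 / 5) with (3 * (3 / 5)) by field. replace (9 / 7) with (3 * (3 / 7)) by field.
  replace (27 / 25) with (3 * (3 / 5) * (3 / 5)) by field.
  replace (27 / 35) with (3 * (3 / 5) * (3 / 7)) by field.
  replace (81 / 125) with (3 * (3 / 5) * (3 / 5) * (3 / 5)) by field.
  rewrite <- !Rpower_mult_distr by lra.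
  pose proof (Rpower_pos 3 x) as Hy.
  set (y := Rpower 3 x) in *. set (A := Rpower (3 / 5) x) in *. set (B := Rpower (3 / 7) x) in *.
  assert (HRy : R <= / y).
  { apply (Rmult_le_reg_l y); [lra|]. rewrite Rinv_r by lra. lra. }
  rewrite Rinv_div.
  pose proof (inv_expansion_error y A B R Hy (proj1 Hord) (proj1 (proj2 Hord))
                (proj2 (proj2 Hord)) (conj HR HRy)).
  lra.
Qed.

Lemma is_lim_inv_dlambda_sub_1 :
  is_lim (fun x => / (dlambda x - 1)
                   - (Rpower 3 x - Rpower (9 / 5) x - Rpower (9 / 7) x + Rpower (27 / 25) x - 1))
    p_infty 0.
Proof.
  set (err := fun x => 15 * Rpower (27 / 35) x + 4 * Rpower (81 / 125) x + 2 * Rpower (9 / 11) x).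
  assert (Herr : is_lim err p_infty 0).
  { replace (Finite 0) with (Finite (15 * 0 + 4 * 0 + 2 * 0)) by (f_equal; ring).
    apply is_lim_plus'; [apply is_lim_plus'|];
      apply (is_lim_scal_l _ _ p_infty 0), is_lim_Rpower_base_lt_1; lra. }
  apply (is_lim_le_le_loc (fun x => - err x) err).
  - exists 7. intros x Hx. apply Rabs_le_between, inv_dlambda_sub_1_error. lra.
  - replace (Finite 0) with (Rbar_opp 0) by (simpl; f_equal; ring).
    apply is_lim_opp, Herr.
  - exact Herr.
Qed.

Theorem mainTheorem13 :
  is_lim
    (fun x : R =>
       dlambda (dlambda x)
       - / 2 * (Rpower 3 x - Rpower (9 / 5) x - Rpower (9 / 7) x
                + Rpower (27 / 25) x - 1))
    p_infty
    (/ 2 * (euler_gamma + ln 2)).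
Proof.
  set (P := fun x => Rpower 3 x - Rpower (9 / 5) x - Rpower (9 / 7) x + Rpower (27 / 25) x - 1).
  assert (Hreg : is_lim (fun x => lambda_reg (dlambda x)) p_infty ((euler_gamma + ln 2) / 2))
    by exact (filterlim_comp _ _ _ dlambda lambda_reg _ _ _
                filterlim_dlambda_at_right_1 lambda_reg_at_1).
  assert (Hgt1 : Rbar_locally p_infty (fun x => 1 < dlambda x))
    by (apply filterlim_dlambda_at_right_1; exists (mkposreal 1 Rlt_0_1); tauto).
  apply (is_lim_ext_loc (fun x => lambda_reg (dlambda x) + / 2 * (/ (dlambda x - 1) - P x))).
  - revert Hgt1. apply filter_imp. intros x Hx.
    rewrite (dlambda_decomposition (dlambda x) Hx). unfold P. field. lra.
  - replace (/ 2 * (euler_gamma + ln 2)) with ((euler_gamma + ln 2) / 2 + / 2 * 0) by field.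
    apply (is_lim_plus' _ _ _ _ _ Hreg).
    apply (is_lim_scal_l _ _ p_infty 0), is_lim_inv_dlambda_sub_1.
Qed.
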